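(* Let $E$ be an evident branch and $\alpha$ a sort. If $E$ contains exactly $n$ disequations at $\alpha$ (formulas of the form $s\neq_\alpha t$), then there are at most $2^n$ $\alpha$-discriminants. If $E$ contains no disequation at $\alpha$, then $\emptyset$ is the only $\alpha$-discriminant.
   Context: Types: a countable set of base types including a distinguished $o$; other base types are sorts. Types: base types and $\sigma\tau$. Countably many names with unique types, infinitely many per type. Terms: names; $st:\mu$ for $s:\tau\mu,t:\tau$; $\lambda x.t:\sigma\tau$ for a name $x:\sigma$, $t:\tau$. $\mathrm{Wff}_\sigma$: terms of type $\sigma$. Logical constants: $\neg:oo$, $=_\sigma:\sigma\sigma o$; other names are variables. Formulas: terms of type $o$; $s=_\sigma t$ is $(=_\sigma s)t$; $s\neq_\sigma t$ is $\neg(s=_\sigma t)$. A fixed type-preserving total normalization operator $[\cdot]$ on terms, with $s$ normal iff $[s]=s$, satisfies $[[s]]=[s]$, $[[s]t]=[st]$, and $[xs_1\dots s_n]=x[s_1]\dots[s_n]$ for any name $x$, $n\ge0$, with $xs_1\dots s_n$ of base type. A branch is a set of normal formulas. $E$ is evident if ($x$ ranges over variables): (DN) $\neg\neg s\in E\Rightarrow s\in E$; (BQ) $s=_ot\in E\Rightarrow$ ($s,t\in E$ or $\neg s,\neg t\in E$); (BE) $s\neq_ot\in E\Rightarrow$ ($s,\neg t\in E$ or $\neg s,t\in E$); (FQ) $s=_{\sigma\tau}t\in E\Rightarrow[su]=[tu]\in E$ for all normal $u:\sigma$; (FE) $s\neq_{\sigma\tau}t\in E\Rightarrow[sx]\neq[tx]\in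 E$ for some variable $x$; (Mat) $xs_1\dots s_n,\neg xt_1\dots t_n\in E\Rightarrow n\ge1$ and $s_i\neq t_i\in E$ for some $i$; (Dec) $xs_1\dots s_n\neq_\alpha xt_1\dots t_n\in E\Rightarrow n\ge 1$ and $s_i\neq t_i\in E$ for some $i$; (Con) $s=_\alpha t,u\neq_\alpha v\in E\Rightarrow$ ($s\neq u,t\neq u\in E$) or ($s\neq v,t\neq v\in E$). A term $u\in\mathrm{Wff}_\alpha$ is $\alpha$-discriminating in $E$ if there is a term $t$ with $u\neq_\alpha t\in E$ or $t\neq_\alpha u\in E$. An $\alpha$-discriminant is a maximal (w.r.t. inclusion) set $a$ of $\alpha$-discriminating terms such that there is no disequation $s\neq t\in E$ with $s,t\in a$. *)

From Stdlib Require Import List Arith.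
Import ListNotations.

(* Types: base types are indexed by nat; Base 0 is the distinguished type o,
   every other base type is a sort.  Arr s t is the function type "s t". *)
Inductive ty : Type := Base (b : nat) | Arr (s t : ty).

Definition ty_eq_dec : forall s t : ty, {s = t} + {s <> t}.
Proof. decide equality; apply Nat.eq_dec. Defined.

Definition o : ty := Base 0.
Definition is_sort (a : ty) : Prop := exists b, a = Base b /\ b <> 0.

Inductive name : Type :=
| Neg : name
| Eq : ty -> name
| Var : ty -> nat -> name.

Definition name_ty (x : name) : ty :=
  match x with
  | Neg => Arr o o
  | Eq s => Arr s (Arr s o)
  | Var s _ => s
  end.

Definition is_var (x : name) : Prop := exists s i, x = Var s i.

(* Raw terms; well-typed terms are those with typeof t = Some _. *)
Inductive tm : Type :=
| Nm : name -> tm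
| App : tm -> tm -> tm
| Lam : name -> tm -> tm.

Fixpoint typeof (t : tm) : option ty :=
  match t with
  | Nm x => Some (name_ty x)
  | App s u =>
      match typeof s, typeof u with
      | Some (Arr a b), Some a' => if ty_eq_dec a a' then Some b else None
      | _, _ => None
      end
  | Lam x u =>
      match typeof u with
      | Some b => Some (Arr (name_ty x) b)
      | None => None
      end
  end.

Definition apps (s : tm) (args : list tm) : tm := fold_left App args s.

Definition neg (s : tm) : tm := App (Nm Neg) s.
Definition eqn (a : ty) (s t : tm) : tm := App (App (Nm (Eq a)) s) t.
Definition diseq (a : ty) (s t : tm) : tm := neg (eqn a s t).

Record NormOp : Type := {
  norm :> tm -> tm;
  norm_type : forall s a, typeof s = Some a -> typeof (norm s) = Some a;
  norm_idem : forall s, typeof s <> None -> norm (norm s) = norm s;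
  norm_app : forall s t, typeof (App s t) <> None ->
               norm (App (norm s) t) = norm (App s t);
  norm_head : forall (x : name) (args : list tm) (b : nat),
      typeof (apps (Nm x) args) = Some (Base b) ->
      norm (apps (Nm x) args) = apps (Nm x) (map norm args)
}.

Definition normal (N : NormOp) (s : tm) : Prop := N s = s.

Definition branch (N : NormOp) (E : tm -> Prop) : Prop :=
  forall s, E s -> typeof s = Some o /\ normal N s.

Definition evident (N : NormOp) (E : tm -> Prop) : Prop :=
  (forall s, E (neg (neg s)) -> E s) /\
  (forall s t, E (eqn o s t) -> (E s /\ E t) \/ (E (neg s) /\ E (neg t))) /\
  (forall s t, E (diseq o s t) -> (E s /\ E (neg t)) \/ (E (neg s) /\ E t)) /\
  (forall a b s t, E (eqn (Arr a b) s t) ->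
     forall u, typeof u = Some a -> normal N u ->
       E (eqn b (N (App s u)) (N (App t u)))) /\
  (forall a b s t, E (diseq (Arr a b) s t) ->
     exists x, is_var x /\ name_ty x = a /\
       E (diseq b (N (App s (Nm x))) (N (App t (Nm x))))) /\
  (forall x ss ts, is_var x ->
     E (apps (Nm x) ss) -> E (neg (apps (Nm x) ts)) ->
     length ss = length ts /\ 1 <= length ss /\
     exists i a, i < length ss /\ typeof (nth i ss (Nm Neg)) = Some a /\
       E (diseq a (nth i ss (Nm Neg)) (nth i ts (Nm Neg)))) /\
  (forall al x ss ts, is_sort al -> is_var x ->
     E (diseq al (apps (Nm x) ss) (apps (Nm x) ts)) ->
     length ss = length ts /\ 1 <= length ss /\
     exists i a, i < length ss /\ typeof (nth i ss (Nm Neg)) = Some a /\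
       E (diseq a (nth i ss (Nm Neg)) (nth i ts (Nm Neg)))) /\
  (forall al s t u v, is_sort al ->
     E (eqn al s t) -> E (diseq al u v) ->
     (E (diseq al s u) /\ E (diseq al t u)) \/
     (E (diseq al s v) /\ E (diseq al t v))).

Definition discriminating (E : tm -> Prop) (al : ty) (u : tm) : Prop :=
  typeof u = Some al /\ exists t, E (diseq al u t) \/ E (diseq al t u).

Definition disc_candidate (E : tm -> Prop) (al : ty) (a : tm -> Prop) : Prop :=
  (forall u, a u -> discriminating E al u) /\
  ~ (exists s t, E (diseq al s t) /\ a s /\ a t).

Definition discriminant (E : tm -> Prop) (al : ty) (a : tm -> Prop) : Prop :=
  disc_candidate E al a /\
  forall b, disc_candidate E al b -> (forall u, a u -> b u) -> forall u, b u -> a u.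

Definition n_diseqs (E : tm -> Prop) (al : ty) (n : nat) : Prop :=
  exists l : list tm, NoDup l /\ length l = n /\
    forall f, (E f /\ exists s t, f = diseq al s t) <-> In f l.

Definition at_most_discriminants (E : tm -> Prop) (al : ty) (m : nat) : Prop :=
  exists l : list (tm -> Prop), length l <= m /\
    forall a, discriminant E al a -> exists b, In b l /\ forall u, a u <-> b u.

From Stdlib Require Import List Arith Lia Classical.
Import ListNotations.

(* A discriminant contains at most one side of each disequation at [al]; by
   maximality it then consists of all discriminating terms except one chosen
   side of every disequation.  So a discriminant is determined by a choice of
   sides, and there are [2 ^ n] such choices. *)

Fixpoint bitvectors (n : nat) : list (list bool) :=
  match n with
  | 0 => [[]]
  | S m => map (cons true) (bitvectors m) ++ map (cons false) (bitvectors m)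
  end.

Lemma length_bitvectors n : length (bitvectors n) = 2 ^ n.
Proof. induction n; simpl; auto. rewrite length_app, !length_map, IHn; lia. Qed.

Lemma in_bitvectors bs : In bs (bitvectors (length bs)).
Proof.
  induction bs as [|b bs IH]; simpl; [now left|].
  destruct b; apply in_or_app; [left|right]; apply in_map; exact IH.
Qed.

Lemma list_choice {A B : Type} (d : A) (b0 : B) (Q : A -> B -> Prop) (l : list A) :
  (forall x, In x l -> exists b, Q x b) ->
  exists bs, length bs = length l /\
    forall k, k < length l -> Q (nth k l d) (nth k bs b0).
Proof.
  induction l as [|x l IH]; intros Hl.
  - exists []; split; [reflexivity | simpl; lia].
  - destruct IH as [bs [Hlen Hbs]]; [intros; apply Hl; now right|].
    destruct (Hl x (or_introl eq_refl)) as [b Hb].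
    exists (b :: bs); split; [simpl; congruence|].
    intros [|k] Hk; [exact Hb | apply Hbs; simpl in Hk; lia].
Qed.

(* Left ([true]) or right ([false]) side of a disequation; junk on other terms. *)
Definition side (f : tm) (b : bool) : tm :=
  match f with
  | App (Nm Neg) (App (App (Nm (Eq _)) s) t) => if b then s else t
  | _ => f
  end.

Section Discriminants.

Variables (E : tm -> Prop) (al : ty).

Definition diseqs_listed (l : list tm) : Prop :=
  forall f, (E f /\ exists s t, f = diseq al s t) <-> In f l.

Definition avoiding_sides (l : list tm) (bs : list bool) (u : tm) : Prop :=
  discriminating E al u /\
  ~ (exists k, k < length l /\ u = side (nth k l (Nm Neg)) (nth k bs false)).

Lemma discriminant_avoids_a_side (a : tm -> Prop) (l : list tm) :
  diseqs_listed l -> discriminant E al a ->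
  forall f, In f l -> exists b, ~ a (side f b).
Proof.
  intros Hl [[_ Hfree] _] f Hf.
  apply Hl in Hf as [HE [s [t ->]]].
  destruct (classic (a s)) as [Hs|Hs].
  - exists false; intro Ht; apply Hfree; exists s, t; auto.
  - now exists true.
Qed.

Lemma avoiding_sides_extends (a : tm -> Prop) (l : list tm) (bs : list bool) (u : tm) :
  diseqs_listed l -> disc_candidate E al a ->
  (forall k, k < length l -> ~ a (side (nth k l (Nm Neg)) (nth k bs false))) ->
  avoiding_sides l bs u -> disc_candidate E al (fun v => a v \/ v = u).
Proof.
  intros Hl [Hdisc Hfree] Hbs [Hu Havoid]; split.
  - intros v [Hv| ->]; auto.
  - intros [s [t [Hst [Hs Ht]]]].
    assert (Hin : In (diseq al s t) l) by (apply Hl; eauto).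
    destruct (In_nth _ _ (Nm Neg) Hin) as [k [Hk Hnth]].
    specialize (Hbs k Hk); rewrite Hnth in Hbs; simpl in Hbs.
    destruct (classic (a s /\ a t)) as [[Has Hat]|Hnot]; [apply Hfree; eauto|].
    apply Havoid; exists k; split; [exact Hk|]; rewrite Hnth.
    destruct (nth k bs false); simpl in *; intuition congruence.
Qed.

Lemma discriminant_eq_avoiding_sides (a : tm -> Prop) (l : list tm) (bs : list bool) :
  diseqs_listed l -> discriminant E al a ->
  (forall k, k < length l -> ~ a (side (nth k l (Nm Neg)) (nth k bs false))) ->
  forall u, a u <-> avoiding_sides l bs u.
Proof.
  intros Hl [Hcand Hmax] Hbs u; split.
  - intros Hu; split; [now apply Hcand|].
    intros [k [Hk ->]]; exact (Hbs k Hk Hu).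
  - intros Hu; destruct (classic (a u)) as [Hau|Hau]; [exact Hau|].
    exact (Hmax _ (avoiding_sides_extends a l bs u Hl Hcand Hbs Hu)
             (fun v h => or_introl h) u (or_intror eq_refl)).
Qed.

Lemma discriminants_at_most_pow2 (l : list tm) :
  diseqs_listed l -> at_most_discriminants E al (2 ^ length l).
Proof.
  intros Hl.
  exists (map (avoiding_sides l) (bitvectors (length l))); split.
  { now rewrite length_map, length_bitvectors. }
  intros a Ha.
  destruct (list_choice (Nm Neg) false (fun f b => ~ a (side f b)) l
              (discriminant_avoids_a_side a l Hl Ha)) as [bs [Hlen Hbs]].
  exists (avoiding_sides l bs); split.
  - apply in_map; rewrite <- Hlen; apply in_bitvectors.
  - exact (discriminant_eq_avoiding_sides a l bs Hl Ha Hbs).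
Qed.

Hypothesis no_diseqs : forall s t, ~ E (diseq al s t).

Lemma not_discriminating u : ~ discriminating E al u.
Proof. intros [_ [t [H|H]]]; eapply no_diseqs; eauto. Qed.

Lemma discriminant_iff_empty (a : tm -> Prop) :
  discriminant E al a <-> (forall u, ~ a u).
Proof.
  split.
  - intros [[Hdisc _] _] u Hu; exact (not_discriminating u (Hdisc u Hu)).
  - intros Ha; split; [split|].
    + intros u Hu; contradiction (Ha u).
    + intros [s [t [H _]]]; exact (no_diseqs s t H).
    + intros b [Hdisc _] _ u Hu; contradiction (not_discriminating u (Hdisc u Hu)).
Qed.

End Discriminants.

Theorem proposition6p3 (N : NormOp) (E : tm -> Prop) (al : ty) :
  branch N E -> evident N E -> is_sort al ->
  (forall n, n_diseqs E al n -> at_most_discriminants E al (2 ^ n)) /\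
  ((forall s t, ~ E (diseq al s t)) ->
     forall a, discriminant E al a <-> (forall u, ~ a u)).
Proof.
  intros _ _ _; split.
  - intros n [l [_ [<- Hl]]].
    exact (discriminants_at_most_pow2 E al l Hl).
  - exact (discriminant_iff_empty E al).
Qed.
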